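(* For each $n$ let $N_n=(N_{n,1},\ldots,N_{n,M_n})$ be multinomially distributed with parameters $(n,p_{n,1},\ldots,p_{n,M_n})$, where $\max_m p_{n,m}\to0$ as $n\to\infty$ and $\liminf_{n\to\infty}n\min_m p_{n,m}>0$. For given real numbers $\alpha_{n,m}$ let $$s_n^2=\frac2{n^2}\sum_m\frac{\alpha_{n,m}^2}{p_{n,m}^2}+\frac4n\sum_m p_{n,m}\Big(\frac{\alpha_{n,m}}{p_{n,m}}-\sum_{m'}\alpha_{n,m'}\Big)^2 .$$ Then $$\sum_m\alpha_{n,m}\Big(\frac{N_{n,m}(N_{n,m}-1)}{n(n-1)p_{n,m}^2}-1\Big)=O_P\Big(s_n+\frac{\sum_m|\alpha_{n,m}|}{\sqrt n}\Big).$$ *)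

From HB Require Import structures.
From mathcomp Require Import all_boot all_order all_algebra.
From mathcomp Require Import reals.
Set Implicit Arguments. Unset Strict Implicit. Unset Printing Implicit Defensive.
Import Order.TTheory GRing.Theory Num.Theory.
Local Open Scope ring_scope.

(* The multinomial law Mult(n; p_1,...,p_M) realised as the law of the cell
   counts of n i.i.d. draws with distribution p on the cells 'I_M. *)
Section Multinomial.
Variables (R : realType) (n M : nat) (p : 'I_M -> R).

Definition mult_weight (w : {ffun 'I_n -> 'I_M}) : R := \prod_(i < n) p (w i).

Definition mult_prob (E : pred {ffun 'I_n -> 'I_M}) : R :=
  \sum_(w : {ffun 'I_n -> 'I_M} | E w) mult_weight w.

Definition cell_count (w : {ffun 'I_n -> 'I_M}) (m : 'I_M) : R :=
  (#|[set i : 'I_n | w i == m]|)%:R.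

Variable alpha : 'I_M -> R.

Definition stat_T (w : {ffun 'I_n -> 'I_M}) : R :=
  \sum_(m < M) alpha m *
    ((cell_count w m * (cell_count w m - 1)) /
       (n%:R * (n%:R - 1) * p m ^+ 2) - 1).

Definition s2 : R :=
  2 / (n%:R ^+ 2) * \sum_(m < M) (alpha m ^+ 2 / p m ^+ 2)
  + 4 / n%:R * \sum_(m < M) p m * (alpha m / p m - \sum_(m' < M) alpha m') ^+ 2.

Definition rate : R :=
  Num.sqrt s2 + (\sum_(m < M) `|alpha m|) / Num.sqrt n%:R.

End Multinomial.

From HB Require Import structures.
From mathcomp Require Import all_boot all_order all_algebra.
From mathcomp Require Import reals.
From mathcomp Require Import ring lra.
Set Implicit Arguments. Unset Strict Implicit. Unset Printing Implicit Defensive.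
Import Order.TTheory GRing.Theory Num.Theory.
Local Open Scope ring_scope.

(* Realise the multinomial vector as the cell counts of an i.i.d. sample
   X_1, ..., X_n with law p.  Then T_n is the degenerate U-statistic
   sum_{i <> j} h(X_i, X_j) with kernel
   h(x, y) = [x = y] alpha_x / (n (n-1) p_x^2) - sum_m alpha_m / (n (n-1)),
   whose projection h_1(x) = E h(x, X) is centred.  Hoeffding's variance
   formula E T_n^2 = 4 n (n-1) (n-2) E h_1(X)^2 + 2 n (n-1) E h(X, Y)^2 gives
   E T_n^2 <= 2 s_n^2, and Chebyshev's inequality concludes. *)

Lemma sum_delta_mul (R : pzSemiRingType) (I : finType) (f : I -> R) y :
  \sum_(z : I) (z == y)%:R * f z = f y.
Proof.
rewrite (bigD1 y) //= eqxx mul1r big1 ?addr0 // => z /negbTE ->.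
by rewrite mul0r.
Qed.

Lemma sum_cell_count (R : realType) n M (w : {ffun 'I_n -> 'I_M}) (G : 'I_M -> R) :
  \sum_(i < n) G (w i) = \sum_(m < M) cell_count R w m * G m.
Proof.
rewrite (partition_big w predT) //=; apply: eq_bigr => m _.
rewrite (eq_bigr (fun _ => G m)); last by move=> i /eqP ->.
by rewrite sumr_const /cell_count mulr_natl cardsE.
Qed.

Section IidExpectation.
Variables (R : realType) (M : nat) (p : 'I_M -> R).

Definition ffun_cons n (x : 'I_M) (v : {ffun 'I_n -> 'I_M}) : {ffun 'I_n.+1 -> 'I_M} :=
  [ffun i => if unlift ord0 i is Some j then v j else x].

Lemma ffun_cons0 n x (v : {ffun 'I_n -> 'I_M}) : ffun_cons x v ord0 = x.
Proof. by rewrite ffunE unlift_none. Qed.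

Lemma ffun_consS n x (v : {ffun 'I_n -> 'I_M}) j : ffun_cons x v (lift ord0 j) = v j.
Proof. by rewrite ffunE liftK. Qed.

Lemma sum_ffun_cons n x (v : {ffun 'I_n -> 'I_M}) (G : 'I_M -> R) :
  \sum_(i < n.+1) G (ffun_cons x v i) = G x + \sum_(i < n) G (v i).
Proof.
rewrite big_ord_recl ffun_cons0; congr (_ + _).
by apply: eq_bigr => i _; rewrite ffun_consS.
Qed.

Lemma mult_weight_cons n x (v : {ffun 'I_n -> 'I_M}) :
  mult_weight p (ffun_cons x v) = p x * mult_weight p v.
Proof.
rewrite /mult_weight big_ord_recl ffun_cons0; congr (_ * _).
by apply: eq_bigr => i _; rewrite ffun_consS.
Qed.

Lemma ffun_cons_bij n :
  bijective (fun u : 'I_M * {ffun 'I_n -> 'I_M} => ffun_cons u.1 u.2).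
Proof.
exists (fun w : {ffun 'I_n.+1 -> 'I_M} => (w ord0, [ffun j => w (lift ord0 j)])).
  move=> [x v] /=; rewrite ffun_cons0; congr (_, _).
  by apply/ffunP => j; rewrite ffunE ffun_consS.
move=> w; apply/ffunP => i; rewrite ffunE /=.
by case: unliftP => [j ->|->] //; rewrite ffunE.
Qed.

Definition Emult n (F : {ffun 'I_n -> 'I_M} -> R) : R :=
  \sum_(w : {ffun 'I_n -> 'I_M}) mult_weight p w * F w.

Lemma Emult_cons n (F : {ffun 'I_n.+1 -> 'I_M} -> R) :
  Emult F = \sum_(x < M) p x * Emult (fun v => F (ffun_cons x v)).
Proof.
rewrite /Emult; under [RHS]eq_bigr => x _ do rewrite big_distrr /=.
rewrite pair_big /= (reindex _ (onW_bij _ (@ffun_cons_bij n))) /=.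
by apply: eq_bigr => u _; rewrite mult_weight_cons mulrA.
Qed.

Lemma eq_Emult n (F G : {ffun 'I_n -> 'I_M} -> R) : F =1 G -> Emult F = Emult G.
Proof. by move=> eqFG; apply: eq_bigr => w _; rewrite eqFG. Qed.

Lemma EmultD n (F G : {ffun 'I_n -> 'I_M} -> R) :
  Emult (fun w => F w + G w) = Emult F + Emult G.
Proof. by rewrite /Emult -big_split; apply: eq_bigr => w _; rewrite mulrDr. Qed.

Lemma EmultZ n c (F : {ffun 'I_n -> 'I_M} -> R) :
  Emult (fun w => c * F w) = c * Emult F.
Proof. by rewrite /Emult big_distrr; apply: eq_bigr => w _; rewrite mulrCA. Qed.

Hypothesis p_ge0 : forall m, 0 <= p m.

Lemma mult_weight_ge0 n (w : {ffun 'I_n -> 'I_M}) : 0 <= mult_weight p w.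
Proof. exact: prodr_ge0. Qed.

Lemma mult_prob_chebyshev n (X : {ffun 'I_n -> 'I_M} -> R) t b :
  0 <= t -> Emult (fun w => X w ^+ 2) <= b * t ^+ 2 -> 0 <= b ->
  mult_prob p (fun w => t < `|X w|) <= b.
Proof.
move=> t_ge0 EX2_le b_ge0.
have term_ge0 w : 0 <= mult_weight p w * X w ^+ 2.
  by rewrite mulr_ge0 ?mult_weight_ge0 ?sqr_ge0.
have markov : mult_prob p (fun w => t < `|X w|) * t ^+ 2 <= Emult (fun w => X w ^+ 2).
  rewrite /mult_prob big_distrl /=.
  apply: (@le_trans _ _ (\sum_(w | t < `|X w|) mult_weight p w * X w ^+ 2)).
    apply: ler_sum => w tX; apply: ler_wpM2l; first exact: mult_weight_ge0.
    rewrite -[X w ^+ 2]real_normK ?num_real //.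
    by apply: lerXn2r; rewrite ?nnegrE // ltW.
  by rewrite /Emult [leRHS](bigID (fun w => t < `|X w|)) /= lerDl sumr_ge0.
have [t0|t_neq0] := eqVneq t 0; last first.
  have t_gt0 : 0 < t by rewrite lt0r t_neq0.
  by rewrite -(ler_pM2r (exprn_gt0 2 t_gt0)) (le_trans markov).
have EX2_0 : Emult (fun w => X w ^+ 2) = 0.
  apply/eqP; rewrite eq_le sumr_ge0 // andbT.
  by move: EX2_le; rewrite t0 expr2 !mulr0.
rewrite /mult_prob big1 // => w; rewrite t0 normr_gt0 => X_neq0.
have /eqP := @psumr_eq0P _ _ predT _ (fun w _ => term_ge0 w) EX2_0 w isT.
by rewrite mulf_eq0 expf_eq0 (negbTE X_neq0) orbF => /eqP.
Qed.

Hypothesis p_sum1 : \sum_(m < M) p m = 1.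

Lemma sum_p_mul c : \sum_(x < M) p x * c = c.
Proof. by rewrite -big_distrl /= p_sum1 mul1r. Qed.

Lemma Emult_const n c : Emult (fun _ : {ffun 'I_n -> 'I_M} => c) = c.
Proof.
elim: n c => [|n IHn] c; last first.
  by rewrite Emult_cons; under eq_bigr do rewrite IHn; rewrite sum_p_mul.
rewrite /Emult -big_distrl /= /mult_weight.
under eq_bigr do rewrite big_ord0.
by rewrite sumr_const card_ffun !card_ord expn0 mul1r.
Qed.

Section UStatisticMoments.
Variable h : 'I_M -> 'I_M -> R.
Hypothesis h_sym : forall x y, h x y = h y x.

Definition hproj y := \sum_(z < M) p z * h z y.
Definition hcov x y := \sum_(z < M) p z * h z x * h z y.
Definition hproj_cov y := \sum_(z < M) p z * hproj z * h z y.
Definition var_hproj := \sum_(x < M) p x * hproj x ^+ 2.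
Definition var_h := \sum_(x < M) p x * hcov x x.

Definition hrow n (w : {ffun 'I_n -> 'I_M}) y := \sum_(i < n) h (w i) y.
Definition ustat n (w : {ffun 'I_n -> 'I_M}) :=
  \sum_(i < n) \sum_(j < n) h (w i) (w j) - \sum_(i < n) h (w i) (w i).

Lemma hrow_cons n x (v : {ffun 'I_n -> 'I_M}) y :
  hrow (ffun_cons x v) y = h x y + hrow v y.
Proof. exact: (sum_ffun_cons x v (h^~ y)). Qed.

Lemma ustat_cons n x (v : {ffun 'I_n -> 'I_M}) :
  ustat (ffun_cons x v) = ustat v + 2 * hrow v x.
Proof.
rewrite /ustat /hrow (sum_ffun_cons x v (fun z => h z z)).
rewrite (sum_ffun_cons x v (fun z => \sum_(j < n.+1) h z (ffun_cons x v j))) /=.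
rewrite (sum_ffun_cons x v (h x)).
under eq_bigr => i _ do rewrite (sum_ffun_cons x v (h (v i))).
rewrite big_split /=.
under [\sum_(i < n) h x (v i)]eq_bigr => i _ do rewrite h_sym.
ring.
Qed.

Lemma sum_p_hcov y : \sum_(z < M) p z * hcov z y = hproj_cov y.
Proof.
rewrite /hcov /hproj_cov; under eq_bigr do rewrite big_distrr /=.
rewrite exchange_big /=; apply: eq_bigr => u _.
rewrite /hproj big_distrr /= big_distrl /=.
by apply: eq_bigr => z _; rewrite (h_sym u z); ring.
Qed.

Lemma sum_p_hproj_cov : \sum_(z < M) p z * hproj_cov z = var_hproj.
Proof.
rewrite /hproj_cov; under eq_bigr do rewrite big_distrr /=.
rewrite exchange_big /=; apply: eq_bigr => u _.
rewrite (eq_bigr (fun i => p u * hproj u * (p i * h i u))); last first.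
  by move=> i _; rewrite (h_sym u i); ring.
by rewrite -big_distrr /= -/(hproj u); ring.
Qed.

Lemma Emult_hrow n y : Emult (fun w : {ffun 'I_n -> 'I_M} => hrow w y) = n%:R * hproj y.
Proof.
elim: n => [|n IHn].
  by rewrite (eq_Emult (G := fun _ => 0)) ?Emult_const ?mul0r // => w; rewrite /hrow big_ord0.
rewrite Emult_cons.
under eq_bigr => x _ do rewrite (eq_Emult (hrow_cons x ^~ y)) EmultD Emult_const IHn.
under eq_bigr do rewrite mulrDr.
by rewrite big_split /= sum_p_mul -/(hproj y) -natr1; ring.
Qed.

Lemma Emult_hrowM n x y :
  Emult (fun w : {ffun 'I_n -> 'I_M} => hrow w x * hrow w y) =
  n%:R * hcov x y + n%:R * (n%:R - 1) * hproj x * hproj y.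
Proof.
elim: n => [|n IHn].
  rewrite (eq_Emult (G := fun _ => 0)) ?Emult_const; first ring.
  by move=> w; rewrite /hrow big_ord0 mul0r.
rewrite Emult_cons.
have cons_z z : Emult (fun v : {ffun 'I_n -> 'I_M} =>
    hrow (ffun_cons z v) x * hrow (ffun_cons z v) y) =
    h z x * h z y + h z x * (n%:R * hproj y) + h z y * (n%:R * hproj x)
    + (n%:R * hcov x y + n%:R * (n%:R - 1) * hproj x * hproj y).
  rewrite (eq_Emult (G := fun v => h z x * h z y + h z x * hrow v y + h z y * hrow v x
                                   + hrow v x * hrow v y)).
    by rewrite !EmultD !EmultZ Emult_const IHn !Emult_hrow.
  by move=> v; rewrite !hrow_cons; ring.
under eq_bigr do rewrite cons_z.
rewrite (eq_bigr (fun z => p z * h z x * h z y + n%:R * hproj y * (p z * h z x)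
   + n%:R * hproj x * (p z * h z y)
   + (n%:R * hcov x y + n%:R * (n%:R - 1) * hproj x * hproj y) * p z)); last first.
  by move=> z _; ring.
by rewrite !big_split /= -!big_distrr /= p_sum1 -natr1 /hproj /hcov; ring.
Qed.

Hypothesis hproj_centered : \sum_(x < M) p x * hproj x = 0.

Lemma Emult_ustat n : Emult (fun w : {ffun 'I_n -> 'I_M} => ustat w) = 0.
Proof.
elim: n => [|n IHn].
  rewrite (eq_Emult (G := fun _ => 0)) ?Emult_const //.
  by move=> w; rewrite /ustat !big_ord0 subr0.
rewrite Emult_cons.
under eq_bigr => z _ do rewrite (eq_Emult (ustat_cons z)) EmultD EmultZ IHn Emult_hrow.
rewrite (eq_bigr (fun z => 2 * n%:R * (p z * hproj z))); last by move=> z _; ring.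
by rewrite -big_distrr /= hproj_centered mulr0.
Qed.

Lemma Emult_ustat_hrow n y :
  Emult (fun w : {ffun 'I_n -> 'I_M} => ustat w * hrow w y) =
  2 * n%:R * (n%:R - 1) * hproj_cov y.
Proof.
elim: n => [|n IHn].
  rewrite (eq_Emult (G := fun _ => 0)) ?Emult_const; first ring.
  by move=> w; rewrite /hrow big_ord0 mulr0.
rewrite Emult_cons.
have cons_z z : Emult (fun v : {ffun 'I_n -> 'I_M} =>
    ustat (ffun_cons z v) * hrow (ffun_cons z v) y) =
    h z y * 0 + 2 * n%:R * (n%:R - 1) * hproj_cov y + 2 * h z y * (n%:R * hproj z)
    + 2 * (n%:R * hcov z y + n%:R * (n%:R - 1) * hproj z * hproj y).
  rewrite (eq_Emult (G := fun v => h z y * ustat v + ustat v * hrow v y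
                                   + 2 * h z y * hrow v z + 2 * (hrow v z * hrow v y))).
    by rewrite !EmultD !EmultZ IHn Emult_hrow Emult_hrowM Emult_ustat.
  by move=> v; rewrite ustat_cons hrow_cons; ring.
under eq_bigr do rewrite cons_z.
rewrite (eq_bigr (fun z => 2 * n%:R * (n%:R - 1) * hproj_cov y * p z
   + 2 * n%:R * (p z * hproj z * h z y) + 2 * n%:R * (p z * hcov z y)
   + 2 * n%:R * (n%:R - 1) * hproj y * (p z * hproj z))); last by move=> z _; ring.
rewrite !big_split /= -!big_distrr /= p_sum1 sum_p_hcov hproj_centered.
by rewrite -/(hproj_cov y) -natr1; ring.
Qed.

Lemma Emult_ustat_sqr n :
  Emult (fun w : {ffun 'I_n -> 'I_M} => ustat w ^+ 2) =
  4 * n%:R * (n%:R - 1) * (n%:R - 2) * var_hproj + 2 * n%:R * (n%:R - 1) * var_h.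
Proof.
elim: n => [|n IHn].
  rewrite (eq_Emult (G := fun _ => 0)) ?Emult_const; first ring.
  by move=> w; rewrite /ustat !big_ord0 subr0 expr2 mul0r.
rewrite Emult_cons.
have cons_z z : Emult (fun v : {ffun 'I_n -> 'I_M} => ustat (ffun_cons z v) ^+ 2) =
    (4 * n%:R * (n%:R - 1) * (n%:R - 2) * var_hproj + 2 * n%:R * (n%:R - 1) * var_h)
    + 4 * (2 * n%:R * (n%:R - 1) * hproj_cov z)
    + 4 * (n%:R * hcov z z + n%:R * (n%:R - 1) * hproj z * hproj z).
  rewrite (eq_Emult (G := fun v => ustat v ^+ 2 + 4 * (ustat v * hrow v z)
                                   + 4 * (hrow v z * hrow v z))).
    by rewrite !EmultD !EmultZ IHn Emult_ustat_hrow Emult_hrowM.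
  by move=> v; rewrite ustat_cons; ring.
under eq_bigr do rewrite cons_z.
rewrite (eq_bigr (fun z =>
   (4 * n%:R * (n%:R - 1) * (n%:R - 2) * var_hproj + 2 * n%:R * (n%:R - 1) * var_h) * p z
   + 8 * n%:R * (n%:R - 1) * (p z * hproj_cov z) + 4 * n%:R * (p z * hcov z z)
   + 4 * n%:R * (n%:R - 1) * (p z * hproj z ^+ 2))); last by move=> z _; ring.
rewrite !big_split /= -!big_distrr /= p_sum1 sum_p_hproj_cov.
by rewrite -/var_hproj -/var_h -natr1; ring.
Qed.

End UStatisticMoments.

End IidExpectation.

Section StatisticAsUStatistic.
Variables (R : realType) (M n : nat) (p alpha : 'I_M -> R).
Hypothesis p_gt0 : forall m, 0 < p m.
Hypothesis p_sum1 : \sum_(m < M) p m = 1.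
Hypothesis n_ge2 : (2 <= n)%N.

Let npairs : R := n%:R * (n%:R - 1).
Let asum := \sum_(m < M) alpha m.
Let sqr_sum := \sum_(m < M) (alpha m ^+ 2 / p m ^+ 2).
Let dev_sum := \sum_(m < M) p m * (alpha m / p m - asum) ^+ 2.

Let diag_coef x := alpha x / (npairs * p x ^+ 2).
Let shift := asum / npairs.

Definition stat_kernel x y : R := (x == y)%:R * diag_coef x - shift.

Let n_gt0 : 0 < n%:R :> R.
Proof. by rewrite ltr0n (leq_trans _ n_ge2). Qed.

Let n_sub1_gt0 : 0 < n%:R - 1 :> R.
Proof. by rewrite subr_gt0 (ltr_nat R 1). Qed.

Let npairs_gt0 : 0 < npairs.
Proof. by rewrite mulr_gt0 ?n_gt0 ?n_sub1_gt0. Qed.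

Let sqr_sum_ge0 : 0 <= sqr_sum.
Proof. by apply: sumr_ge0 => m _; rewrite divr_ge0 ?sqr_ge0. Qed.

Let dev_sum_ge0 : 0 <= dev_sum.
Proof. by apply: sumr_ge0 => m _; rewrite mulr_ge0 ?sqr_ge0 ?ltW. Qed.

Let p_neq0 x : p x != 0. Proof. by rewrite gt_eqF. Qed.
Let npairs_neq0 : npairs != 0. Proof. by rewrite gt_eqF ?npairs_gt0. Qed.

Lemma stat_kernel_sym x y : stat_kernel x y = stat_kernel y x.
Proof. by rewrite /stat_kernel; case: eqVneq => [->|] //; rewrite !mul0r. Qed.

Lemma hproj_stat_kernel y : hproj p stat_kernel y = (alpha y / p y - asum) / npairs.
Proof.
rewrite /hproj /stat_kernel.
under eq_bigr do rewrite mulrBr mulrCA.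
rewrite sumrB sum_delta_mul -big_distrl /= p_sum1.
by rewrite /diag_coef /shift; field; rewrite npairs_neq0 p_neq0.
Qed.

Lemma hproj_stat_kernel_centered : \sum_(x < M) p x * hproj p stat_kernel x = 0.
Proof.
under eq_bigr do rewrite hproj_stat_kernel.
rewrite (eq_bigr (fun x => (alpha x - asum * p x) / npairs)); last first.
  by move=> x _; field; rewrite npairs_neq0 p_neq0.
by rewrite -big_distrl /= sumrB -big_distrr /= p_sum1 mulr1 subrr mul0r.
Qed.

Lemma var_hproj_stat_kernel : var_hproj p stat_kernel = dev_sum / npairs ^+ 2.
Proof.
rewrite /var_hproj /dev_sum big_distrl /=; apply: eq_bigr => x _.
by rewrite hproj_stat_kernel; field; rewrite npairs_neq0 p_neq0.
Qed.

Lemma var_h_stat_kernel : var_h p stat_kernel = sqr_sum / npairs ^+ 2 - shift ^+ 2.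
Proof.
have hcov_diag x : hcov p stat_kernel x x =
    p x * (diag_coef x ^+ 2 - 2 * diag_coef x * shift) + shift ^+ 2.
  rewrite /hcov (eq_bigr (fun z => (z == x)%:R * (p z * (diag_coef z ^+ 2
      - 2 * diag_coef z * shift)) + shift ^+ 2 * p z)); last first.
    by move=> z _; rewrite /stat_kernel; case: eqP => [->|_]; rewrite ?mul1r ?mul0r; ring.
  by rewrite big_split /= sum_delta_mul -big_distrr /= p_sum1 mulr1.
rewrite /var_h; under eq_bigr do rewrite hcov_diag.
rewrite (eq_bigr (fun x => alpha x ^+ 2 / p x ^+ 2 / npairs ^+ 2
    - 2 * shift / npairs * alpha x + shift ^+ 2 * p x)); last first.
  by move=> x _; rewrite /diag_coef; field; rewrite npairs_neq0 p_neq0.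
rewrite big_split /= sumrB -big_distrl -!big_distrr /= p_sum1 -/sqr_sum -/asum /shift.
by field.
Qed.

Lemma stat_T_ustat (w : {ffun 'I_n -> 'I_M}) : stat_T p alpha w = ustat stat_kernel w.
Proof.
have row i : \sum_(j < n) stat_kernel (w i) (w j) =
    cell_count R w (w i) * diag_coef (w i) - n%:R * shift.
  rewrite /stat_kernel sumrB sumr_const card_ord mulr_natl -big_distrl /=.
  rewrite (sum_cell_count w (fun m => (w i == m)%:R)).
  by under eq_bigr do rewrite eq_sym mulrC; rewrite sum_delta_mul.
have ustat_counts : ustat stat_kernel w =
    \sum_(m < M) cell_count R w m * (cell_count R w m * diag_coef m)
    - \sum_(m < M) cell_count R w m * diag_coef m - npairs * shift.
  rewrite /ustat; under eq_bigr do rewrite row.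
  rewrite /stat_kernel; under [X in _ - X]eq_bigr do rewrite eqxx mul1r.
  rewrite !sumrB !sumr_const !card_ord (sum_cell_count w diag_coef).
  by rewrite (sum_cell_count w (fun m => cell_count R w m * diag_coef m)) /npairs; ring.
rewrite ustat_counts [npairs * _]mulrC /shift divfK // -sumrB /stat_T /asum -sumrB.
apply: eq_bigr => m _; rewrite /diag_coef /npairs; field.
by rewrite p_neq0 !gt_eqF ?n_gt0 ?n_sub1_gt0.
Qed.

Lemma Emult_stat_T_sqr_le :
  Emult p (fun w : {ffun 'I_n -> 'I_M} => stat_T p alpha w ^+ 2) <= 2 * s2 n p alpha.
Proof.
rewrite (eq_Emult p (G := fun w => ustat stat_kernel w ^+ 2)); last first.
  by move=> w; rewrite stat_T_ustat.
rewrite (Emult_ustat_sqr p_sum1 stat_kernel_sym hproj_stat_kernel_centered).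
rewrite var_hproj_stat_kernel var_h_stat_kernel -subr_ge0.
have n_ge2R : 2 <= n%:R :> R by rewrite (ler_nat R 2).
set u : R := n%:R.
have -> : 2 * s2 n p alpha - (4 * u * (u - 1) * (u - 2) * (dev_sum / npairs ^+ 2)
    + 2 * u * (u - 1) * (sqr_sum / npairs ^+ 2 - shift ^+ 2)) =
    dev_sum * (4 * u / npairs) + sqr_sum * ((2 * u - 4) / (u * npairs))
    + 2 * npairs * shift ^+ 2.
  rewrite /s2 -/u -/asum -/sqr_sum -/dev_sum /npairs -/u.
  by field; rewrite !gt_eqF ?n_gt0 ?n_sub1_gt0.
have u_gt0 : 0 < u := n_gt0.
have K_gt0 := npairs_gt0.
rewrite !addr_ge0 // mulr_ge0 // ?sqr_ge0 ?divr_ge0 ?mulr_ge0 //; lra.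
Qed.

Lemma s2_ge0 : 0 <= s2 n p alpha.
Proof.
rewrite /s2 -/asum -/sqr_sum -/dev_sum.
by rewrite addr_ge0 // mulr_ge0 // divr_ge0 ?sqr_ge0.
Qed.

Lemma rate_ge0 : 0 <= rate n p alpha.
Proof. by rewrite addr_ge0 ?sqrtr_ge0 ?divr_ge0 ?sqrtr_ge0 ?sumr_ge0. Qed.

Lemma s2_le_sqr_rate : s2 n p alpha <= rate n p alpha ^+ 2.
Proof.
rewrite -[s2 _ _ _]sqr_sqrtr ?s2_ge0 //.
apply: lerXn2r; rewrite ?nnegrE ?sqrtr_ge0 ?rate_ge0 //.
by rewrite lerDl divr_ge0 ?sqrtr_ge0 ?sumr_ge0.
Qed.

Lemma Emult_stat_T_sqr_le_rate :
  Emult p (fun w : {ffun 'I_n -> 'I_M} => stat_T p alpha w ^+ 2) <= 2 * rate n p alpha ^+ 2.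
Proof.
apply: le_trans Emult_stat_T_sqr_le _.
by rewrite ler_pM2l ?s2_le_sqr_rate.
Qed.

End StatisticAsUStatistic.

Theorem lemma8 (R : realType) (M : nat -> nat)
  (p alpha : forall n : nat, 'I_(M n) -> R)
  (p_ge0 : forall (n : nat) (m : 'I_(M n)), 0 <= p n m)
  (p_sum1 : forall n : nat, \sum_(m < M n) p n m = 1)
  (* max_m p_{n,m} -> 0 *)
  (hmax : forall eps : R, 0 < eps ->
     exists n0 : nat, forall n : nat, (n0 <= n)%N -> forall m : 'I_(M n), p n m <= eps)
  (* liminf_n n * min_m p_{n,m} > 0 *)
  (hmin : exists c : R, 0 < c /\
     exists n0 : nat, forall n : nat, (n0 <= n)%N -> forall m : 'I_(M n), c <= n%:R * p n m) :
  (* T_n = O_P(s_n + sum_m |alpha_{n,m}| / sqrt n) *)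
  forall eps : R, 0 < eps ->
    exists C : R, exists n0 : nat, forall n : nat, (n0 <= n)%N ->
      mult_prob (p n)
        (fun w : {ffun 'I_n -> 'I_(M n)} =>
           C * rate n (p n) (alpha n) < `|stat_T (p n) (alpha n) w|) <= eps.
Proof.
move=> eps eps_gt0.
have [c [c_gt0 [n0 c_le]]] := hmin.
set C := 1 + 2 / eps.
have C_ge1 : 1 <= C by rewrite lerDl divr_ge0 // ltW.
have eps_C2 : 2 <= eps * C ^+ 2.
  have eps_C : eps * C = eps + 2 by rewrite mulrDr mulr1 mulrCA divff ?gt_eqF ?mulr1.
  by rewrite expr2 mulrA eps_C; nra.
exists C, (maxn n0 2) => n; rewrite geq_max => /andP[n0_le_n n_ge2].
have p_gt0 m : 0 < p n m.
  rewrite lt0r p_ge0 andbT; apply: contraTneq (c_le n n0_le_n m) => ->.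
  by rewrite mulr0 -ltNge.
apply: (mult_prob_chebyshev (p_ge0 n)); last exact: ltW.
  by rewrite mulr_ge0 ?rate_ge0 // (le_trans ler01).
apply: le_trans (Emult_stat_T_sqr_le_rate (alpha n) p_gt0 (p_sum1 n) n_ge2) _.
by rewrite exprMn [eps * _]mulrA; apply: ler_wpM2r; rewrite ?sqr_ge0.
Qed.
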